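(* Let $n\ge 1$. For every $\phi\in\mathcal{B}_n$ with $\phi\neq 1$ there exist $i\in\{1,\dots,n-1\}$ and $\epsilon\in\{1,-1\}$ such that $\|\sigma_i^{\epsilon}\phi\|\le\|\phi\|-2$. Consequently $\mathcal{B}_n$ is generated by $\sigma_1,\dots,\sigma_{n-1}$.
   Context: $\Sigma_{0,1,n}$ is the free group with free basis $t_1,\dots,t_n$, and $z_1:=(t_1t_2\cdots t_n)^{-1}$. Notation: $\overline a:=a^{-1}$, $a^b:=b^{-1}ab$, and $[a]$ denotes the conjugacy class of $a$. Automorphisms act on the right and are written as exponents; they compose left to right, i.e. $w^{\phi\psi}=(w^\phi)^\psi$. $\mathcal{B}_n$ is the group of all automorphisms $\phi$ of $\Sigma_{0,1,n}$ such that $z_1^\phi=z_1$ and $\phi$ permutes the set of conjugacy classes $\{[t_1],\dots,[t_n]\}$. For $i\in\{1,\dots,n-1\}$, $\sigma_i\in\mathcal{B}_n$ is the automorphism given by $t_k^{\sigma_i}=t_k$ for $k\notin\{i,i+1\}$, $t_i^{\sigma_i}=t_{i+1}$, and $t_{i+1}^{\sigma_i}=\overline t_{i+1}t_it_{i+1}$. For $w\in\Sigma_{0,1,n}$, $|w|$ is the length of the reduced word in $t_1^{\pm1},\dots,t_n^{\pm1}$ representing $w$. For $\phi\in\mathcal{B}_n$, $\|\phi\|:=\sum_{i=1}^n|t_i^\phi|$. *)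

(* The free group Sigma_{0,1,n} on t_1..t_n is modelled by
   freely reduced words over the letters ('I_n * bool), where (k,false) is
   t_{k+1} and (k,true) is its inverse (indices are 0-based). *)
From mathcomp Require Import all_boot all_order all_fingroup.
Set Implicit Arguments. Unset Strict Implicit. Unset Printing Implicit Defensive.

Section FreeGroup.
Variable n : nat.

Definition letter := ('I_n * bool)%type.
Definition word := seq letter.

Definition linv (x : letter) : letter := (x.1, ~~ x.2).
Definition winv (u : word) : word := rev (map linv u).

Definition reduce (w : word) : word :=
  foldr (fun x acc => match acc with
                      | y :: r => if y == linv x then r else x :: acc
                      | [::] => [:: x]
                      end) [::] w.

Definition reduced (w : word) : bool := reduce w == w.

Definition tgen (k : 'I_n) : word := [:: (k, false)].

(* An endomorphism is given by the images of the generators;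
   ext f w = w^f (reduced). *)
Definition ext (f : 'I_n -> word) (w : word) : word :=
  reduce (flatten (map (fun x : letter => if x.2 then winv (f x.1) else f x.1) w)).

(* composition, acting on the right: t_k^(f g) = (t_k^f)^g *)
Definition acomp (f g : 'I_n -> word) : 'I_n -> word := fun k => ext g (f k).

Definition is_aut (f : 'I_n -> word) : Prop :=
  exists g : 'I_n -> word,
    forall w : word, ext g (ext f w) = reduce w /\ ext f (ext g w) = reduce w.

(* z_1 = (t_1 ... t_n)^{-1} = t_n^{-1} ... t_1^{-1} *)
Definition z1 : word := rev (map (fun k : 'I_n => (k, true)) (enum 'I_n)).

Definition conjugate (a b : word) : Prop :=
  exists u : word, reduce a = reduce (winv u ++ b ++ u).

Definition inB (f : 'I_n -> word) : Prop :=
  [/\ is_aut f, ext f z1 = z1 &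
      exists p : {perm 'I_n}, forall k : 'I_n, conjugate (f k) (tgen (p k))].

Definition is_identity (f : 'I_n -> word) : Prop :=
  forall k : 'I_n, reduce (f k) = tgen k.

Definition norm (f : 'I_n -> word) : nat := \sum_(k < n) size (reduce (f k)).

(* sigma_i^eps for the 0-based index i (i.e. sigma_{i+1} in the paper), with
   j = i+1 (meaningful when i.+1 < n).  eps = false : sigma_i, eps = true :
   sigma_i^{-1}, given explicitly by t_i -> t_i t_{i+1} t_i^{-1},
   t_{i+1} -> t_i. *)
Definition sigma (i : 'I_n) (eps : bool) : 'I_n -> word :=
  let j : 'I_n := insubd i i.+1 in
  fun k =>
    if ~~ eps then
      (if k == i then [:: (j, false)]
       else if k == j then [:: (j, true); (i, false); (j, false)]
       else tgen k)
    else
      (if k == i then [:: (i, false); (j, false); (i, true)]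
       else if k == j then [:: (i, false)]
       else tgen k).

(* product sigma_{s_1}^{e_1} ... sigma_{s_m}^{e_m} (left to right) *)
Definition sigma_prod (s : seq ('I_n * bool)) : 'I_n -> word :=
  foldr (fun p acc => acomp (sigma p.1 p.2) acc) tgen s.

End FreeGroup.

(* Write t_k^phi = A_k^-1 t_{q k} A_k, freely reduced.  If for some adjacent
   pair k, k+1 more than min(|A_k|, |A_{k+1}|) letters cancel in the product
   of their images, then the shorter conjugate absorbs the longer one, and
   sigma_k^{-1} (if |A_k| <= |A_{k+1}|) or sigma_k (otherwise) shortens phi
   by two ([conj_shorten], [adjacent_small_cancel]).  Otherwise every adjacent
   pair has small cancellation, so the reduced product of all the images has
   length at least n + 2 max |A_k| ([chain_length]); since that product is
   t_1 ... t_n, all A_k are empty and phi is the identity.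

   Both only use the two properties [braid_like] of elements of
   B_n, which the sigma_i preserve. *)

From Pilot Require Import Defs.
From mathcomp Require Import all_boot all_order all_fingroup.
From mathcomp Require Import zify_ssreflect.
Set Implicit Arguments. Unset Strict Implicit. Unset Printing Implicit Defensive.

Lemma cat_eq_prefix (T : Type) (s1 s2 s3 s4 : seq T) :
  s1 ++ s2 = s3 ++ s4 -> size s3 <= size s1 ->
  exists d, s1 = s3 ++ d /\ s4 = d ++ s2.
Proof.
elim: s3 s1 => [|x s3 IH] s1 /=; first by move=> <- _; exists s1.
case: s1 => [|y s1] //= [-> E] H.
by have [d [-> ->]] := IH _ E H; exists d.
Qed.

Section FreeReduction.
Variable n : nat.
Local Notation letter := (letter n).
Local Notation word := (word n).
Local Notation reduce := (@reduce n).
Local Notation winv := (@winv n).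
Local Notation linv := (@linv n).

Lemma linvK : involutive linv.
Proof. by case=> a b; rewrite /linv /= negbK. Qed.

Lemma linv_inj : injective linv.
Proof. exact: (inv_inj linvK). Qed.

Definition push (x : letter) (w : word) : word :=
  if w is y :: r then (if y == linv x then r else x :: w) else [:: x].

Lemma reduce_cons x w : reduce (x :: w) = push x (reduce w).
Proof. by []. Qed.

Definition nocancel (w : word) : bool := sorted (fun a b => b != linv a) w.

Lemma nocancel_cons x w :
  nocancel (x :: w) = nocancel w && (if w is y :: _ then y != linv x else true).
Proof. by case: w => [|y w] //=; rewrite andbC. Qed.

Lemma nocancel_push x w : nocancel w -> nocancel (push x w).
Proof.
case: w => [|y w] // Hw; rewrite /push.
case: ifP => [_|Hy]; first by move: Hw; rewrite nocancel_cons => /andP[].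
by rewrite nocancel_cons Hw Hy.
Qed.

Lemma nocancel_reduce w : nocancel (reduce w).
Proof. by elim: w => [|x w IH] //=; apply: nocancel_push. Qed.

Lemma reduce_id w : nocancel w -> reduce w = w.
Proof.
elim: w => [|x w IH] //; rewrite nocancel_cons => /andP[Hw Hh].
rewrite reduce_cons IH //; case: w Hw Hh {IH} => [|y w] //= _ Hy.
by rewrite (negbTE Hy).
Qed.

Lemma reduceK w : reduce (reduce w) = reduce w.
Proof. exact/reduce_id/nocancel_reduce. Qed.

Lemma size_reduce w : size (reduce w) <= size w.
Proof.
elim: w => [|x w IH] //; rewrite reduce_cons.
case: (reduce w) IH => [|y r] //= IH; case: ifP => //= _.
by apply: leq_trans (ltnW IH) _.
Qed.

Lemma push_linv x w : nocancel w -> push x (push (linv x) w) = w.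
Proof.
case: w => [|y w] Hw; first by rewrite /= eqxx.
rewrite /push; case: ifP => [/eqP Ey|Hy]; last by rewrite eqxx.
move: Hw; rewrite Ey linvK nocancel_cons => /andP[_].
by case: w => [|z w] // /negbTE ->.
Qed.

Lemma reduce_catE u v : reduce (u ++ v) = foldr push (reduce v) u.
Proof. by rewrite /reduce foldr_cat. Qed.

Lemma nocancel_foldr_push u acc : nocancel acc -> nocancel (foldr push acc u).
Proof. by elim: u => [|x u IH] //= H; apply/nocancel_push/IH. Qed.

Lemma foldr_push_reduce u acc :
  nocancel acc -> foldr push acc u = foldr push acc (reduce u).
Proof.
move=> Hacc; elim: u => [|x u IH] //.
rewrite reduce_cons [LHS]/= IH.
have : nocancel (reduce u) by apply: nocancel_reduce.
case: (reduce u) => [|y r] // Hr.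
rewrite /(push x (y :: r)); case: ifP => [/eqP Hy|] //.
rewrite /= Hy push_linv //.
by apply: nocancel_foldr_push; move: Hr; rewrite nocancel_cons => /andP[].
Qed.

Lemma reduce_catr u v : reduce (u ++ reduce v) = reduce (u ++ v).
Proof. by rewrite !reduce_catE reduceK. Qed.

Lemma reduce_catl u v : reduce (reduce u ++ v) = reduce (u ++ v).
Proof. by rewrite !reduce_catE -foldr_push_reduce //; apply: nocancel_reduce. Qed.

Lemma reduce_mid u v w : reduce (u ++ reduce v ++ w) = reduce (u ++ v ++ w).
Proof. by rewrite -reduce_catr reduce_catl reduce_catr. Qed.

Lemma reduce_cat3 u v w :
  reduce (u ++ v ++ w) = reduce (reduce u ++ reduce v ++ reduce w).
Proof. by rewrite reduce_mid reduce_catl !catA reduce_catr. Qed.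

Lemma winv_cat u v : winv (u ++ v) = winv v ++ winv u.
Proof. by rewrite /winv map_cat rev_cat. Qed.

Lemma winv_cons x u : winv (x :: u) = winv u ++ [:: linv x].
Proof. by rewrite /winv /= rev_cons cats1. Qed.

Lemma winv_rcons x u : winv (rcons u x) = linv x :: winv u.
Proof. by rewrite /winv map_rcons rev_rcons. Qed.

Lemma winvK : involutive winv.
Proof. by move=> u; rewrite /winv map_rev revK (mapK linvK). Qed.

Lemma size_winv u : size (winv u) = size u.
Proof. by rewrite /winv size_rev size_map. Qed.

Lemma nocancel_winv w : nocancel w -> nocancel (winv w).
Proof.
rewrite /nocancel /winv rev_sorted sorted_map; apply: sub_sorted => a b /=.
by apply: contra => /eqP ->; rewrite linvK.
Qed.

Lemma reduce_invl u v : reduce (u ++ winv u ++ v) = reduce v.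
Proof.
elim: u v => [|x u IH] v //.
rewrite winv_cons -catA cat_cons reduce_cons IH cat1s reduce_cons push_linv //.
exact: nocancel_reduce.
Qed.

Lemma reduce_invr u v : reduce (winv u ++ u ++ v) = reduce v.
Proof. by rewrite -{2}(winvK u) reduce_invl. Qed.

Lemma reduce_invl_mid w u v : reduce (w ++ u ++ winv u ++ v) = reduce (w ++ v).
Proof. by rewrite -reduce_catr reduce_invl reduce_catr. Qed.

Lemma reduce_invr_mid w u v : reduce (w ++ winv u ++ u ++ v) = reduce (w ++ v).
Proof. by rewrite -reduce_catr reduce_invr reduce_catr. Qed.

Lemma reduce_invl_end u v : reduce (u ++ v ++ winv v) = reduce u.
Proof. by rewrite -[v ++ winv v]cats0 -catA reduce_invl_mid cats0. Qed.

Lemma reduce_invr_end u v : reduce (u ++ winv v ++ v) = reduce u.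
Proof. by rewrite -[winv v ++ v]cats0 -catA reduce_invr_mid cats0. Qed.

Lemma reduce_winv u : reduce (winv u) = winv (reduce u).
Proof.
rewrite -[RHS]reduce_id; last exact/nocancel_winv/nocancel_reduce.
by rewrite -(reduce_invl_end (winv u) (reduce u)) reduce_mid reduce_invr.
Qed.

Lemma size_reduce_winv (w : word) : size (reduce (winv w)) = size (reduce w).
Proof. by rewrite reduce_winv size_winv. Qed.

Lemma reduce_cat_split u v : nocancel u -> nocancel v -> exists u1 c v2,
  [/\ u = u1 ++ c, v = winv c ++ v2 & reduce (u ++ v) = u1 ++ v2].
Proof.
move=> + Hv; elim: u => [|x u IH] Hu.
  by exists [::], [::], v; rewrite reduce_id.
have Hu' : nocancel u by move: Hu; rewrite nocancel_cons => /andP[].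
have [u1 [c [v2 [E1 E2 E3]]]] := IH Hu'.
rewrite cat_cons reduce_cons E3.
case: u1 E1 E3 => [|y u1] E1 E3.
  case: v2 E2 E3 => [|z v2] E2 E3.
    by exists [:: x], c, [::]; rewrite E1.
  rewrite /push; case: ifP => [/eqP Hz|Hz].
    exists [::], (x :: c), v2; split => //; first by rewrite E1.
    by rewrite E2 winv_cons -catA Hz.
  by exists [:: x], c, (z :: v2); rewrite E1.
exists (x :: y :: u1), c, v2; split => //; first by rewrite E1.
rewrite /push /=; move: Hu; rewrite E1 nocancel_cons => /andP[_] /=.
by move/negbTE => ->.
Qed.

Lemma nocancel_cat (u v : word) : nocancel (u ++ v) = [&& nocancel u, nocancel v &
  (if u is x :: u' then (if v is y :: _ then y != linv (last x u') else true)
   else true)].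
Proof.
case: u => [|x u]; first by rewrite /= andbT.
case: v => [|y v]; first by rewrite cats0 /= andbT.
rewrite /nocancel /= cat_path /=.
by case: (path _ x u); case: (y != _); case: (path _ y v).
Qed.

Lemma nocancel_catl (u v : word) : nocancel (u ++ v) -> nocancel u.
Proof. by rewrite nocancel_cat => /andP[]. Qed.

Lemma nocancel_catr (u v : word) : nocancel (u ++ v) -> nocancel v.
Proof. by rewrite nocancel_cat => /and3P[]. Qed.

Lemma nocancel_glue (X Y Z : word) :
  nocancel (X ++ Y) -> nocancel (Y ++ Z) -> Y != [::] -> nocancel (X ++ Y ++ Z).
Proof.
case: Y => [|y Y] // H1 H2 _.
rewrite nocancel_cat H2 (nocancel_catl H1) /=.
move: H1; rewrite nocancel_cat => /and3P[_ _].
by case: X => [|x X] //; rewrite last_cat.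
Qed.

End FreeReduction.

Section Conjugates.
Variable n : nat.
Local Notation letter := (letter n).
Local Notation word := (word n).

Definition cword (p : word * letter) : word := winv p.1 ++ p.2 :: p.1.

Lemma winv_cword A x : winv (cword (A, x)) = cword (A, linv x).
Proof. by rewrite /cword winv_cat winv_cons winvK -catA. Qed.

Lemma size_cword p : size (cword p) = (size p.1).*2.+1.
Proof. by rewrite /cword size_cat size_winv /= addnS -addnn. Qed.

Lemma cword_conj_letter A x y : nocancel (cword (A, x)) ->
  exists A', reduce (linv y :: cword (A, x) ++ [:: y]) = cword (A', x).
Proof.
rewrite /cword; case/lastP: A => [|A' z] HM.
  exists (if (x == y) || (y == linv x) then [::] else [:: y]).
  rewrite /= /reduce /=.
  case: (eqVneq y (linv x)) => [->|Hy]; first by rewrite orbT /= linvK.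
  rewrite orbF /= linvK.
  by case: eqP => [->|].
case: (eqVneq z (linv y)) => [Ez|Hz].
  exists A'.
  move: HM; rewrite winv_rcons Ez linvK => HM.
  have -> : linv y :: ((y :: winv A') ++ x :: rcons A' (linv y)) ++ [:: y] =
     winv [:: y] ++ [:: y] ++ ((winv A' ++ x :: A') ++ [:: linv y] ++
       winv [:: linv y] ++ [::]).
    by rewrite -!catA /= linvK -cats1 -catA.
  rewrite reduce_invr reduce_invl_mid cats0 reduce_id //.
  move: HM; rewrite -cats1.
  have -> : (y :: winv A') ++ x :: (A' ++ [:: linv y]) =
     [:: y] ++ ((winv A' ++ x :: A') ++ [:: linv y]) by rewrite /= -!catA.
  by move=> /nocancel_catr /nocancel_catl.
exists (rcons (rcons A' z) y).
rewrite reduce_id; last first.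
  move: HM; rewrite winv_rcons => HM.
  rewrite nocancel_cons nocancel_cat HM /= last_cat /= last_rcons.
  have Hz' : y != linv z by apply: contra Hz => /eqP ->; rewrite linvK.
  by rewrite Hz' (inj_eq (@linv_inj n)) Hz.
by rewrite !winv_rcons -!cats1 -!catA /= -!catA.
Qed.

Lemma conj_normal_form (u : word) x :
  exists A, reduce (winv u ++ x :: u) = cword (A, x).
Proof.
elim/last_ind: u => [|u y [A IH]]; first by exists [::].
have HM : nocancel (cword (A, x)) by rewrite -IH; apply: nocancel_reduce.
have [A' E] := cword_conj_letter y HM.
exists A'; rewrite -E winv_rcons cat_cons reduce_cons.
by rewrite [RHS]reduce_cons -IH reduce_catl -cats1 -catA.
Qed.

Lemma cword_conj_prefix (A D : word) u v :
  reduce (cword (A, u) ++ cword (winv D ++ u :: A, v) ++ winv (cword (A, u)))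
  = reduce (cword (winv D ++ A, v)).
Proof.
set B := winv D ++ u :: A.
have E1 : reduce ((winv A ++ u :: A) ++ winv B) = reduce (winv A ++ D).
  have -> : (winv A ++ u :: A) ++ winv B =
    (winv A ++ [:: u]) ++ A ++ winv A ++ (winv [:: u] ++ D).
    by rewrite /B winv_cat winv_cons winvK -!catA.
  by rewrite reduce_invl_mid -catA reduce_invl_mid.
have E2 : reduce (B ++ winv (winv A ++ u :: A)) = reduce (winv D ++ A).
  have -> : B ++ winv (winv A ++ u :: A) =
    (winv D ++ [:: u]) ++ A ++ winv A ++ (winv [:: u] ++ A).
    by rewrite (winv_cword A u) /B -!catA.
  by rewrite reduce_invl_mid -catA reduce_invl_mid.
transitivity (reduce (((winv A ++ u :: A) ++ winv B) ++ [:: v] ++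
                      (B ++ winv (winv A ++ u :: A)))).
  by rewrite /cword /= -!catA /= -!catA.
by rewrite reduce_cat3 E1 E2 -reduce_cat3 /cword /= winv_cat winvK -!catA.
Qed.

Lemma long_cancel_prefix (A B : word) u v U1 C V2 :
  cword (A, u) = U1 ++ C -> cword (B, v) = winv C ++ V2 ->
  size A < size C -> size A <= size B -> v != linv u ->
  exists D, B = winv D ++ u :: A.
Proof.
rewrite /cword /= => HU HV HC HAB Hv.
have HsU : size U1 + size C = (size A).*2.+1.
  by rewrite -size_cat -HU size_cat /= size_winv addnS -addnn.
have Hs1 : size U1 <= size (winv A) by rewrite size_winv; lia.
have [d [Ed EC]] := cat_eq_prefix HU Hs1.
move: HV; rewrite EC winv_cat winv_cons -!catA => HV.
have Hs : size (winv A ++ [:: linv u]) <= size (winv B).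
  rewrite size_cat !size_winv /= addn1 ltn_neqAle HAB andbT.
  apply/negP => /eqP Eab.
  have Hs2 : size (winv A) <= size (winv B) by rewrite !size_winv Eab.
  have [D' [E1 E2]] := cat_eq_prefix HV Hs2.
  have HD' : size D' = 0.
    by move/(congr1 size): E1; rewrite size_cat !size_winv Eab; lia.
  case: D' E1 E2 HD' => // _ [E2 _] _.
  by move: Hv; rewrite -E2 eqxx.
have [D [ED _]] := cat_eq_prefix (etrans HV (catA _ _ _)) Hs.
by exists D; rewrite -(winvK B) ED !winv_cat winvK /= linvK.
Qed.

(* Small cancellation between consecutive conjugates: at most
   min(|A|, |B|) letters of each of [cword (A, u)] and [cword (B, v)] cancel
   in their product. *)
Definition small_cancel (p q : word * letter) : bool :=
  size (cword p) + size (cword q)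
    <= size (reduce (cword p ++ cword q)) + 2 * minn (size p.1) (size q.1).

(* Failure of small cancellation lets the shorter conjugate absorb the
   longer one, shortening the latter by at least two letters. *)
Lemma conj_shorten p q :
  nocancel (cword p) -> nocancel (cword q) -> size p.1 <= size q.1 ->
  q.2 != linv p.2 -> ~~ small_cancel p q ->
  size (reduce (cword p ++ cword q ++ winv (cword p))) + 2 <= size (cword q).
Proof.
case: p q => A u [B v] /= HA HB Hle Hv Hbig.
have [U1 [C [V2 [EU EV ER]]]] := reduce_cat_split HA HB.
have HC : size A < size C.
  move: Hbig; rewrite /small_cancel ER EU EV !size_cat size_winv (minn_idPl Hle).
  lia.
have [D ->] := long_cancel_prefix EU EV HC Hle Hv.
rewrite cword_conj_prefix; apply: leq_trans (leq_add (size_reduce _) (leqnn 2)) _.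
by rewrite !size_cword /= !size_cat size_winv /=; lia.
Qed.

(* The same statement with the roles of the two factors exchanged, obtained
   by inverting everything. *)
Lemma conj_shorten_inv p q :
  nocancel (cword p) -> nocancel (cword q) -> size q.1 <= size p.1 ->
  q.2 != linv p.2 -> ~~ small_cancel p q ->
  size (reduce (winv (cword q) ++ cword p ++ cword q)) + 2 <= size (cword p).
Proof.
case: p q => A u [B v] /= HA HB Hle Hv Hbig.
rewrite -size_reduce_winv (winv_cat (winv _)) (winv_cat (cword _)) winvK -catA.
have := @conj_shorten (B, linv v) (A, linv u).
rewrite /= -!winv_cword !size_winv winvK => H; apply: H; rewrite ?nocancel_winv //.
  by rewrite linvK eq_sym.
rewrite /small_cancel -!winv_cword !size_winv -winv_cat size_reduce_winv.
by rewrite minnC addnC.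
Qed.

End Conjugates.

Arguments cword {n}.
Arguments small_cancel {n}.

Section SmallCancellation.
Variable n : nat.
Local Notation letter := (letter n).
Local Notation word := (word n).

Lemma small_cancel_step (X A : word) (x : letter) (q : word * letter) :
  nocancel (X ++ x :: A) -> nocancel (cword (A, x)) -> nocancel (cword q) ->
  small_cancel (A, x) q ->
  exists X' c, [/\ reduce ((X ++ x :: A) ++ cword q) = X' ++ q.2 :: q.1,
    c <= size A, c <= size q.1 &
    size (X' ++ q.2 :: q.1) + 2 * c = size (X ++ x :: A) + 2 * size q.1 + 1].
Proof.
case: q => A' x' HP Hp Hq /=; rewrite /small_cancel => Hsmall.
have [U1 [C [V2 [EU EV ER]]]] := reduce_cat_split Hp Hq.
have HcA : size C <= minn (size A) (size A').
  by move: Hsmall; rewrite ER EU EV !size_cat size_winv /=; lia.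
have HU : U1 ++ C = (winv A ++ [:: x]) ++ A by rewrite -EU /cword /= -catA.
have HsU1 : size (winv A ++ [:: x]) <= size U1.
  by move/(congr1 size): HU; rewrite !size_cat size_winv /=; lia.
have [A0 [EU1 EA]] := cat_eq_prefix HU HsU1.
have HV : winv A' ++ x' :: A' = winv C ++ V2 by rewrite -EV.
have HsC : size (winv C) <= size (winv A') by rewrite !size_winv; lia.
have [D [ED EV2]] := cat_eq_prefix HV HsC.
have HR1 : nocancel (X ++ x :: A0).
  by move: HP; rewrite EA -cat_cons catA => /nocancel_catl.
have HR2 : nocancel ((x :: A0) ++ D ++ x' :: A').
  have := nocancel_reduce (cword (A, x) ++ cword (A', x')).
  by rewrite ER EU1 -EV2 -!catA /= => /nocancel_catr.
exists (X ++ x :: A0 ++ D), (size C); split; first 1 last.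
- by lia.
- by lia.
- move/(congr1 size): ED; rewrite EA !size_cat !size_winv /= !size_cat; lia.
rewrite /cword /= ED EA.
have -> : (X ++ x :: A0 ++ C) ++ (winv C ++ D) ++ x' :: A'
    = (X ++ x :: A0) ++ C ++ winv C ++ (D ++ x' :: A') by rewrite -!catA /= -!catA.
rewrite reduce_invl_mid reduce_id; first by rewrite -!catA /= -!catA.
by have := nocancel_glue HR1 HR2 isT; rewrite -!catA.
Qed.

(* Invariant of the left-to-right multiplication of a chain of reduced
   conjugates with small cancellation between consecutive ones: each new
   factor adds at least one letter on top of twice the largest conjugator. *)
Lemma chain_length_gen (L : seq (word * letter)) (X : word) (p : word * letter)
    (m M : nat) :
  nocancel (X ++ p.2 :: p.1) -> nocancel (cword p) ->
  all (fun q => nocancel (cword q)) L -> path small_cancel p L ->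
  m + 2 * maxn (size p.1) M <= size (X ++ p.2 :: p.1) ->
  m + size L + 2 * maxn (maxn (size p.1) M) (\max_(q <- L) size q.1)
    <= size (reduce ((X ++ p.2 :: p.1) ++ flatten (map cword L))).
Proof.
elim: L X p m M => [|q L IH] X [A x] m M /= HP Hp.
  by move=> _ _ H; rewrite big_nil cats0 reduce_id // maxn0 addn0.
case/andP=> Hq HL /andP[Hsmall Hpath] Hsize.
have [X' [c [ER HcA HcA' Hs]]] := small_cancel_step HP Hp Hq Hsmall.
have HP' : nocancel (X' ++ q.2 :: q.1) by rewrite -ER; apply: nocancel_reduce.
have Hsize' : m.+1 + 2 * maxn (size q.1) (maxn (size A) M)
              <= size (X' ++ q.2 :: q.1) by lia.
rewrite catA -reduce_catl ER big_cons.
apply: leq_trans (IH X' q m.+1 (maxn (size A) M) HP' Hq HL Hpath Hsize').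
by rewrite maxnCA maxnA addnS addSn.
Qed.

Lemma chain_length (p : word * letter) (L : seq (word * letter)) :
  nocancel (cword p) -> all (fun q => nocancel (cword q)) L ->
  path small_cancel p L ->
  (size L).+1 + 2 * \max_(q <- p :: L) size q.1
    <= size (reduce (flatten (map cword (p :: L)))).
Proof.
move=> Hp HL Hpath.
have := @chain_length_gen L (winv p.1) p 1 0 Hp Hp HL Hpath.
rewrite big_cons maxn0 add1n; apply.
by rewrite size_cat size_winv /= addnS ltnS mul2n -addnn.
Qed.

End SmallCancellation.

Section BraidAction.
Variable n : nat.
Local Notation letter := (letter n).
Local Notation word := (word n).

Lemma reduce_flatten (T : eqType) (F G : T -> word) (s : seq T) :
  {in s, forall x, reduce (F x) = reduce (G x)} ->
  reduce (flatten (map F s)) = reduce (flatten (map G s)).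
Proof.
elim: s => [|x s IH] //= H.
rewrite -reduce_catl H ?mem_head // reduce_catl -reduce_catr IH ?reduce_catr //.
by move=> y Hy; apply: H; rewrite in_cons Hy orbT.
Qed.

Lemma ext_congr (g h : 'I_n -> word) w :
  (forall k, reduce (g k) = reduce (h k)) -> ext g w = ext h w.
Proof.
move=> H; apply: reduce_flatten => x _; case: x.2 => //.
by rewrite !reduce_winv H.
Qed.

Lemma ext_tgen (f : 'I_n -> word) k : ext f (tgen k) = reduce (f k).
Proof. by rewrite /ext /= cats0. Qed.

Lemma ext_conjl (f : 'I_n -> word) a b :
  ext f [:: (a, false); (b, false); (a, true)] =
  reduce (f a ++ f b ++ winv (f a)).
Proof. by rewrite /ext /= cats0. Qed.

Lemma ext_conjr (f : 'I_n -> word) a b :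
  ext f [:: (b, true); (a, false); (b, false)] =
  reduce (winv (f b) ++ f a ++ f b).
Proof. by rewrite /ext /= cats0. Qed.

Definition next (i : 'I_n) : 'I_n := insubd i i.+1.

Lemma next_neq (i : 'I_n) : i.+1 < n -> next i != i.
Proof.
move=> H; apply/eqP => /(congr1 val); rewrite val_insubd H => /eqP.
by rewrite eqn_leq ltnn.
Qed.

Section Sigma.
Variables (f : 'I_n -> word) (i : 'I_n).
Hypothesis Hi : i.+1 < n.

Lemma sigma_i : reduce (acomp (sigma i false) f i) = reduce (f (next i)).
Proof. by rewrite /acomp /sigma eqxx /= ext_tgen reduceK. Qed.

Lemma sigma_next :
  reduce (acomp (sigma i false) f (next i))
  = reduce (winv (f (next i)) ++ f i ++ f (next i)).
Proof.
by rewrite /acomp /sigma (negbTE (next_neq Hi)) eqxx /= ext_conjr reduceK.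
Qed.

Lemma sigmaV_i :
  reduce (acomp (sigma i true) f i) = reduce (f i ++ f (next i) ++ winv (f i)).
Proof. by rewrite /acomp /sigma eqxx /= ext_conjl reduceK. Qed.

Lemma sigmaV_next : reduce (acomp (sigma i true) f (next i)) = reduce (f i).
Proof.
by rewrite /acomp /sigma (negbTE (next_neq Hi)) eqxx /= ext_tgen reduceK.
Qed.

Lemma sigma_other eps k : k != i -> k != next i ->
  reduce (acomp (sigma i eps) f k) = reduce (f k).
Proof.
move=> H1 H2.
by rewrite /acomp /sigma (negbTE H1) (negbTE H2) if_same ext_tgen reduceK.
Qed.

Lemma sigma_pair eps :
  reduce (acomp (sigma i eps) f i ++ acomp (sigma i eps) f (next i))
  = reduce (f i ++ f (next i)).
Proof.
rewrite -reduce_catl -reduce_catr; case: eps.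
  by rewrite sigmaV_i sigmaV_next // reduce_catr reduce_catl -!catA
     (catA (f i)) reduce_invr_end.
by rewrite sigma_i sigma_next // reduce_catr reduce_catl reduce_invl.
Qed.

End Sigma.

Definition tprod : word := map (fun k => (k, false)) (enum 'I_n).
Definition prodw (f : 'I_n -> word) : word := flatten (map f (enum 'I_n)).

(* Unlike [inB], this is evidently preserved by the sigma_i. *)
Definition braid_like (f : 'I_n -> word) : Prop :=
  reduce (prodw f) = tprod /\
  exists q : 'I_n -> 'I_n, forall k, Defs.conjugate (f k) (tgen (q k)).

Lemma inB_braid_like (f : 'I_n -> word) : inB f -> braid_like f.
Proof.
case=> _ Hz [p Hp]; split; last by exists p.
have Ez1 : z1 n = winv tprod.
  by rewrite /z1 /tprod /winv -!map_comp; congr rev; apply: eq_map.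
have E1 : flatten (map (fun x : letter => if x.2 then winv (f x.1) else f x.1) (z1 n))
          = winv (prodw f).
  rewrite /z1 map_rev -map_comp /prodw.
  elim: (enum 'I_n) => [|k s IH] //=.
  by rewrite rev_cons flatten_rcons IH winv_cat.
move: Hz; rewrite /ext E1 Ez1 reduce_winv => /(congr1 (@winv n)).
by rewrite !winvK.
Qed.

Lemma enum_adjacent (i : 'I_n) : i.+1 < n ->
  exists l1 l2, enum 'I_n = l1 ++ i :: next i :: l2.
Proof.
move=> Hi; have Hs : i.+1 < size (enum 'I_n) by rewrite size_enum_ord.
exists (take i (enum 'I_n)), (drop i.+2 (enum 'I_n)).
rewrite -{1}(cat_take_drop i (enum 'I_n)); congr (_ ++ _).
rewrite (drop_nth i) ?(ltnW Hs) // (drop_nth i) //.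
congr (_ :: _ :: _); apply: val_inj.
  by rewrite /= nth_enum_ord // (ltnW Hi).
by rewrite /= nth_enum_ord // val_insubd Hi.
Qed.

Lemma prodw_sigma (f : 'I_n -> word) (i : 'I_n) eps : i.+1 < n ->
  reduce (prodw (acomp (sigma i eps) f)) = reduce (prodw f).
Proof.
move=> Hi; have [l1 [l2 El]] := enum_adjacent Hi.
have := enum_uniq 'I_n; rewrite El cat_uniq => /and3P[_ Hl1 Hu2].
have Hi1 : i \notin l1.
  by apply: contra Hl1 => H; apply/hasP; exists i => //; rewrite mem_head.
have Hj1 : next i \notin l1.
  by apply: contra Hl1 => H; apply/hasP; exists (next i) => //; rewrite !inE eqxx orbT.
move: Hu2; rewrite cons_uniq in_cons negb_or cons_uniq.
case/andP=> /andP[_ Hi2] /andP[Hj2 _].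
rewrite /prodw El !map_cat !flatten_cat /= (catA (acomp _ f i)) (catA (f i)).
rewrite reduce_cat3 [RHS]reduce_cat3 sigma_pair //.
rewrite (reduce_flatten (s := l1) (G := f)); last first.
  by move=> k Hk; apply: sigma_other => //; [move: Hi1|move: Hj1];
    apply: contraNneq => <-.
rewrite (reduce_flatten (s := l2) (G := f)) // => k Hk.
by apply: sigma_other => //; [move: Hi2|move: Hj2]; apply: contraNneq => <-.
Qed.

Lemma conjugate_reduce (a a' b : word) :
  reduce a = reduce a' -> Defs.conjugate a b -> Defs.conjugate a' b.
Proof. by move=> E [u Hu]; exists u; rewrite -E. Qed.

Lemma conjugate_conj (a b w : word) :
  Defs.conjugate a b -> Defs.conjugate (winv w ++ a ++ w) b.
Proof.
case=> u Hu; exists (u ++ w).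
by rewrite -reduce_mid Hu reduce_mid winv_cat -!catA.
Qed.

(* The sigma_i^{+-1} preserve braid-likeness; the conjugated generators are
   permuted by the transposition of i and i+1. *)
Lemma braid_like_sigma (f : 'I_n -> word) (i : 'I_n) eps :
  i.+1 < n -> braid_like f -> braid_like (acomp (sigma i eps) f).
Proof.
move=> Hi [Hp [q Hq]]; split; first by rewrite prodw_sigma.
exists (fun k => if k == i then q (next i) else if k == next i then q i else q k).
move=> k; case: (eqVneq k i) => [->|Hki]; last case: (eqVneq k (next i)) => [->|Hkj].
- case: eps.
    apply: (conjugate_reduce (a := winv (winv (f i)) ++ f (next i) ++ winv (f i))).
      by rewrite winvK sigmaV_i.
    exact: conjugate_conj.
  by apply: (conjugate_reduce (a := f (next i))); [rewrite sigma_i|apply: Hq].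
- case: eps.
    by apply: (conjugate_reduce (a := f i)); [rewrite sigmaV_next|apply: Hq].
  apply: (conjugate_reduce (a := winv (f (next i)) ++ f i ++ f (next i))).
    by rewrite sigma_next.
  exact: conjugate_conj.
- by apply: (conjugate_reduce (a := f k)); [rewrite sigma_other|apply: Hq].
Qed.

End BraidAction.

Arguments tprod {n}.

Section Descent.
Variable n : nat.
Local Notation letter := (letter n).
Local Notation word := (word n).

Lemma sum_two_changed (F G : 'I_n -> nat) i j : i != j ->
  (forall k, k != i -> k != j -> F k = G k) ->
  F i + F j + 2 <= G i + G j -> \sum_(k < n) F k + 2 <= \sum_(k < n) G k.
Proof.
move=> Hij HFG H.
rewrite (bigD1 (F:=F) i) // (bigD1 (F:=G) i) //.
rewrite (bigD1 (F:=F) j) /=; last by rewrite eq_sym.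
rewrite (bigD1 (F:=G) j) /=; last by rewrite eq_sym.
rewrite (eq_bigr G); last by move=> k /andP[Hi Hj]; apply: HFG.
lia.
Qed.

Lemma descent_sigmaV (f : 'I_n -> word) (i : 'I_n) : i.+1 < n ->
  size (reduce (f i ++ f (next i) ++ winv (f i))) + 2
    <= size (reduce (f (next i))) ->
  norm (acomp (sigma i true) f) + 2 <= norm f.
Proof.
move=> Hi H; apply: (sum_two_changed (i := i) (j := next i)).
- by rewrite eq_sym next_neq.
- by move=> k H1 H2; rewrite sigma_other.
- by rewrite sigmaV_i // sigmaV_next //; lia.
Qed.

Lemma descent_sigma (f : 'I_n -> word) (i : 'I_n) : i.+1 < n ->
  size (reduce (winv (f (next i)) ++ f i ++ f (next i))) + 2
    <= size (reduce (f i)) ->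
  norm (acomp (sigma i false) f) + 2 <= norm f.
Proof.
move=> Hi H; apply: (sum_two_changed (i := i) (j := next i)).
- by rewrite eq_sym next_neq.
- by move=> k H1 H2; rewrite sigma_other.
- by rewrite sigma_i // sigma_next //; lia.
Qed.

Lemma nocancel_positive (w : word) :
  all (fun x : letter => ~~ x.2) w -> nocancel w.
Proof.
elim: w => [|x w IH] // /andP[Hx Hw].
rewrite nocancel_cons IH //; case: w Hw {IH} => [|y w] //= /andP[Hy _].
by apply: contraNneq Hy => ->.
Qed.

Section Conjugators.
Variables (f : 'I_n -> word) (A : 'I_n -> word) (q : 'I_n -> 'I_n).
Hypothesis HA : forall k, reduce (f k) = cword (A k, (q k, false)).

Let conj_pair (k : 'I_n) : word * letter := (A k, (q k, false)).

Lemma adjacent_small_cancel (i : 'I_n) : i.+1 < n ->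
  (forall eps, ~~ (norm (acomp (sigma i eps) f) + 2 <= norm f)) ->
  small_cancel (conj_pair i) (conj_pair (next i)).
Proof.
move=> Hi Hno; apply/negPn/negP => Hbig.
have Hr k : nocancel (cword (conj_pair k)) by rewrite -HA nocancel_reduce.
have Hf k : reduce (f k) = reduce (cword (conj_pair k)) by rewrite -HA reduceK.
have Hv : (q (next i), false) != linv (q i, false).
  by rewrite /linv /= xpair_eqE andbF.
case: (leqP (size (A i)) (size (A (next i)))) => Hle.
  apply: (negP (Hno true)); apply: descent_sigmaV => //.
  have -> : reduce (f i ++ f (next i) ++ winv (f i)) =
    reduce (cword (conj_pair i) ++ cword (conj_pair (next i)) ++
            winv (cword (conj_pair i))).
    by rewrite reduce_cat3 reduce_winv !Hf -reduce_winv -reduce_cat3.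
  by rewrite HA; apply: conj_shorten.
apply: (negP (Hno false)); apply: descent_sigma => //.
have -> : reduce (winv (f (next i)) ++ f i ++ f (next i)) =
  reduce (winv (cword (conj_pair (next i))) ++ cword (conj_pair i) ++
          cword (conj_pair (next i))).
  by rewrite reduce_cat3 reduce_winv !Hf -reduce_winv -reduce_cat3.
by rewrite HA; apply: conj_shorten_inv => //; apply: ltnW.
Qed.

Lemma trivial_conjugators :
  reduce (prodw f) = tprod -> (forall k, A k = [::]) -> is_identity f.
Proof.
move=> Hprod HA0.
have Hq : map (fun k => (q k, false)) (enum 'I_n) = tprod.
  rewrite -Hprod (reduce_flatten (G := fun k => [:: (q k, false)])).
    rewrite flatten_map1 reduce_id //; apply: nocancel_positive.
    by rewrite all_map; apply/allP.
  by move=> k _; rewrite HA HA0.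
move=> k; rewrite HA HA0 /tgen.
by have := (eq_in_map _ _ _).2 Hq k; rewrite mem_enum => /(_ isT) [->].
Qed.

(* If moreover f fixes t_1 ... t_n and consecutive images have small
   cancellation, then all conjugators are trivial: by [chain_length] the
   product t_1 ... t_n would otherwise have more than n letters. *)
Lemma chain_trivial_conjugators :
  reduce (prodw f) = tprod -> sorted small_cancel (map conj_pair (enum 'I_n)) ->
  forall k, A k = [::].
Proof.
move=> Hprod Hsorted k.
have Hlen : size (reduce (flatten (map cword (map conj_pair (enum 'I_n))))) = n.
  rewrite -map_comp -(reduce_flatten (F := f)).
    by rewrite Hprod /tprod size_map size_enum_ord.
  by move=> m _; rewrite /= HA reduce_id // -HA nocancel_reduce.
have Hr m : nocancel (cword (conj_pair m)) by rewrite -HA nocancel_reduce.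
have Hk : conj_pair k \in map conj_pair (enum 'I_n) by rewrite map_f ?mem_enum.
have HE : size (enum 'I_n) = n by rewrite size_enum_ord.
case Een: (enum 'I_n) Hk Hsorted Hlen HE => [|k0 E] // Hk Hsorted Hlen HE.
have HL : all (fun p => nocancel (cword p)) (map conj_pair E).
  by apply/allP => p /mapP [m _ ->].
have := chain_length (Hr k0) HL Hsorted; rewrite -map_cons Hlen size_map.
have := @leq_bigmax_seq _ _ xpredT (fun p : word * letter => size p.1) _ Hk isT.
move: (\max_(_ <- _) _) HE => m /= HE Hk_le Hmax; apply/size0nil; lia.
Qed.

End Conjugators.

Lemma sorted_enum_next (R : rel 'I_n) :
  (forall i : 'I_n, i.+1 < n -> R i (next i)) -> sorted R (enum 'I_n).
Proof.
move=> HR.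
have Hsucc m k : sorted (fun a b : nat => b == a.+1) (iota m k).
  elim: k m => [|[|k] IH] m //=.
  by rewrite eqxx; have := IH m.+1.
have := Hsucc 0 n; rewrite -val_enum_ord sorted_map.
apply: sub_sorted => x y /= /eqP Hy.
have Hx : x.+1 < n by rewrite -Hy ltn_ord.
have -> : y = next x by apply: val_inj; rewrite val_insubd Hx.
exact: HR.
Qed.

Lemma braid_descent (f : 'I_n -> word) : braid_like f -> ~ is_identity f ->
  exists (i : 'I_n) (eps : bool),
    i.+1 < n /\ norm (acomp (sigma i eps) f) + 2 <= norm f.
Proof.
move=> [Hprod [q Hq]] Hid.
have : forall k, exists A, reduce (f k) = cword (A, (q k, false)).
  move=> k; have [u Hu] := Hq k.
  by have [A HA] := conj_normal_form u (q k, false); exists A; rewrite Hu.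
case/fin_all_exists => A HA.
case: (boolP [exists i : 'I_n, exists eps : bool,
   (i.+1 < n) && (norm (acomp (sigma i eps) f) + 2 <= norm f)]).
  by case/existsP => i /existsP [eps /andP [H1 H2]]; exists i, eps.
move=> /existsPn Hno; exfalso; apply/Hid/(trivial_conjugators HA Hprod).
apply: (chain_trivial_conjugators HA Hprod).
rewrite sorted_map; apply: sorted_enum_next => i Hi.
apply: adjacent_small_cancel => // eps.
by move/existsPn: (Hno i) => /(_ eps); rewrite Hi.
Qed.

End Descent.

Section Generation.
Variable n : nat.
Local Notation word := (word n).

Lemma sigma_cancel (f : 'I_n -> word) (i : 'I_n) eps k : i.+1 < n ->
  ext (acomp (sigma i eps) f) (sigma i (~~ eps) k) = reduce (f k).
Proof.
move=> Hi; have Hji := next_neq Hi.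
case: (eqVneq k i) => [->|Hki].
  rewrite /sigma eqxx; case: eps => /=.
    by rewrite ext_tgen sigmaV_next.
  rewrite ext_conjl reduce_cat3 reduce_winv sigma_i // sigma_next //.
  by rewrite -reduce_winv -reduce_cat3 -!catA reduce_invl reduce_invl_end.
case: (eqVneq k (next i)) => [->|Hkj].
  rewrite /sigma (negbTE Hji) eqxx; case: eps => /=.
    rewrite ext_conjr reduce_cat3 reduce_winv sigmaV_i // sigmaV_next //.
    by rewrite -reduce_winv -reduce_cat3 -!catA reduce_invr reduce_invr_end.
  by rewrite ext_tgen sigma_i.
by rewrite /sigma (negbTE Hki) (negbTE Hkj) if_same ext_tgen sigma_other.
Qed.

Lemma braid_generation (f : 'I_n -> word) : braid_like f ->
  exists s : seq ('I_n * bool), all (fun p : 'I_n * bool => p.1.+1 < n) s /\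
    forall k, sigma_prod s k = reduce (f k).
Proof.
move Hm: (norm f) => m; elim/ltn_ind: m f Hm => m IH f Hm Hf.
have [Hid|Hnid] := boolP [forall k, reduce (f k) == tgen k].
  by exists [::]; split => // k; rewrite (eqP (forallP Hid k)).
have [|i [eps [Hi Hdesc]]] := braid_descent Hf.
  by move=> Hid; move/forallPn: Hnid => [k]; rewrite Hid eqxx.
have Hlt : norm (acomp (sigma i eps) f) < m by lia.
have [s [Hs1 Hs2]] := IH _ Hlt _ (erefl _) (braid_like_sigma eps Hi Hf).
exists ((i, ~~ eps) :: s); split; first by rewrite /= Hi.
move=> k; rewrite /= /acomp -(sigma_cancel f eps k Hi).
by apply: ext_congr => j; rewrite Hs2 reduceK.
Qed.

End Generation.

Theorem proposition3p3 (n : nat) (hn : 1 <= n) :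
  (forall f : 'I_n -> word n, inB f -> ~ is_identity f ->
     exists (i : 'I_n) (eps : bool),
       i.+1 < n /\ norm (acomp (sigma i eps) f) + 2 <= norm f) /\
  (forall f : 'I_n -> word n, inB f ->
     exists s : seq ('I_n * bool),
       all (fun p : 'I_n * bool => p.1.+1 < n) s /\
       forall k : 'I_n, sigma_prod s k = reduce (f k)).
Proof.
split=> f /inB_braid_like Hf; first exact: braid_descent.
exact: braid_generation.
Qed.
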